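(* Under the standing assumptions, for $0\le i\le d$ the following holds on $V$: $$E^*_0\,\tau_i(A)\,E^*_0=\frac{\zeta_i\,E^*_0}{(\theta^*_0-\theta^*_1)(\theta^*_0-\theta^*_2)\cdots(\theta^*_0-\theta^*_i)}.$$
   Context: Let $\mathbb F$ be an algebraically closed field, $d\ge0$, and $q,a,b,c,a^*,b^*,c^*\in\mathbb F$ with $q,b,c,b^*,c^*$ nonzero and $q^2\ne\pm1$. Put $\theta_i=a+bq^{2i-d}+cq^{d-2i}$ and $\theta^*_i=a^*+b^*q^{2i-d}+c^*q^{d-2i}$ ($0\le i\le d$), and assume $\theta_0,\dots,\theta_d$ are mutually distinct and $\theta^*_0,\dots,\theta^*_d$ are mutually distinct (this forces $q^{2i}\ne1$ for $1\le i\le d$). For an indeterminate $\lambda$, $\tau_i=(\lambda-\theta_0)(\lambda-\theta_1)\cdots(\lambda-\theta_{i-1})$ ($\tau_0=1$). $U_q(\widehat{\mathfrak{sl}}_2)$ is the associative unital $\mathbb F$-algebra with generators $e_i^{\pm},K_i^{\pm1}$ ($i\in\{0,1\}$) and relations $K_iK_i^{-1}=K_i^{-1}K_i=1$, $K_0K_1=K_1K_0$, $K_ie_i^{\pm}K_i^{-1}=q^{\pm2}e_i^{\pm}$, $K_ie_j^{\pm}K_i^{-1}=q^{\mp2}e_j^{\pm}$ ($i\ne j$), $e_i^+e_i^--e_i^-e_i^+=(K_i-K_i^{-1})/(q-q^{-1})$, $e_0^{\pm}e_1^{\mp}=e_1^{\mp}e_0^{\pm}$, and the $q$-Serre relations $(e_i^\pm)^3e_j^\pm-[3]_q(e_i^\pm)^2e_j^\pm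 e_i^\pm+[3]_qe_i^\pm e_j^\pm(e_i^\pm)^2-e_j^\pm(e_i^\pm)^3=0$ ($i\ne j$), where $[3]_q=q^2+1+q^{-2}$. Tensor products of modules are formed via $e_i^+(v\otimes w)=e_i^+v\otimes K_iw+v\otimes e_i^+w$, $e_i^-(v\otimes w)=e_i^-v\otimes w+K_i^{-1}v\otimes e_i^-w$, $K_i(v\otimes w)=K_iv\otimes K_iw$. For nonzero $\alpha\in\mathbb F$, $V(\alpha)$ is the module with basis $x,y$ and $K_1x=qx$, $K_1y=q^{-1}y$, $e_1^-x=y$, $e_1^-y=0$, $e_1^+x=0$, $e_1^+y=x$, $K_0x=q^{-1}x$, $K_0y=qy$, $e_0^-x=0$, $e_0^-y=q\alpha^{-1}x$, $e_0^+x=q^{-1}\alpha y$, $e_0^+y=0$. $V=V(\alpha_1)\otimes\cdots\otimes V(\alpha_d)$ with nonzero $\alpha_i\in\mathbb F$ (for $d=0$, the trivial module where each $e_i^\pm$ acts as $0$ and each $K_i^{\pm1}$ as $1$). $U_0$ is the $1$-dimensional span of $x\otimes\cdots\otimes x$. Fix $u,v,u^*,v^*\in\mathbb F$ with $uv^*=-bb^*q^{-1}(q-q^{-1})^2$, $vu^*=-cc^*q^{-1}(q-q^{-1})^2$; set $R=ue_0^++ve_1^-K_1$, $L=u^*e_1^++v^*e_0^-K_0$, $A=a1+bK_0+cK_1+R$, $A^*=a^*1+b^*K_0+c^*K_1+L$, and $E^*_0=\prod_{1\le j\le d}(A^*-\theta^*_j1)/(\theta^*_0-\theta^*_j)$ in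 $U_q(\widehat{\mathfrak{sl}}_2)$. For $0\le i\le d$, $\zeta_i$ denotes the scalar by which $L^iR^i$ acts on $U_0$ (the split sequence of $V$). *)

From HB Require Import structures.
From mathcomp Require Import all_boot all_order all_algebra all_field.
Set Implicit Arguments. Unset Strict Implicit. Unset Printing Implicit Defensive.
Import Order.TTheory GRing.Theory Num.Theory.
Local Open Scope ring_scope.

(* The module V = V(alpha_1) (x) ... (x) V(alpha_d) of U_q(sl2^) is modelled
   concretely: operators on V are square matrices over F of size dimV s
   (= 2^d), acting on column vectors of coordinates.  For a single factor
   V(alpha) the basis is x (index 0), y (index 1).  The tensor product
   V(alpha) (x) W is realised by the Kronecker product (block matrices), so
   the basis vector x(x)...(x)x is the first coordinate vector. *)

Fixpoint dimV {F : Type} (s : seq F) : nat :=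
  match s with [::] => 1%N | _ :: s' => (dimV s' + dimV s')%N end.

Inductive gen := E0p | E0m | E1p | E1m | K0 | K1 | K0i | K1i.

Section Rep.
Variable F : fieldType.

Definition mx2 (m00 m01 m10 m11 : F) : 'M[F]_2 :=
  \matrix_(i < 2, j < 2)
    if (i == 0 :> nat) then (if (j == 0 :> nat) then m00 else m01)
    else (if (j == 0 :> nat) then m10 else m11).

Definition kron2 n (A : 'M[F]_2) (B : 'M[F]_n) : 'M[F]_(n + n) :=
  block_mx (A ord0 ord0 *: B) (A ord0 ord_max *: B)
           (A ord_max ord0 *: B) (A ord_max ord_max *: B).

(* action of the generators on the evaluation module V(alpha) *)
Definition rep1 (q alpha : F) (g : gen) : 'M[F]_2 :=
  match g with
  | K1 => mx2 q 0 0 q^-1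
  | K1i => mx2 q^-1 0 0 q
  | K0 => mx2 q^-1 0 0 q
  | K0i => mx2 q 0 0 q^-1
  | E1m => mx2 0 0 1 0
  | E1p => mx2 0 1 0 0
  | E0m => mx2 0 (q / alpha) 0 0
  | E0p => mx2 0 0 (alpha / q) 0
  end.

(* action on V(alpha_1) (x) ... (x) V(alpha_d), using the coproduct
   e^+ (v (x) w) = e^+ v (x) K w + v (x) e^+ w,
   e^- (v (x) w) = e^- v (x) w + K^{-1} v (x) e^- w,
   K (v (x) w) = K v (x) K w. *)
Fixpoint rep (q : F) (s : seq F) : gen -> 'M[F]_(dimV s) :=
  match s return gen -> 'M[F]_(dimV s) with
  | [::] => fun g => match g with
                     | K0 | K1 | K0i | K1i => 1%:M
                     | _ => 0
                     end
  | a :: s' => fun g =>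
      let r := rep q s' in
      let r1 := rep1 q a in
      match g with
      | E0p => kron2 (r1 E0p) (r K0) + kron2 1%:M (r E0p)
      | E1p => kron2 (r1 E1p) (r K1) + kron2 1%:M (r E1p)
      | E0m => kron2 (r1 E0m) 1%:M + kron2 (r1 K0i) (r E0m)
      | E1m => kron2 (r1 E1m) 1%:M + kron2 (r1 K1i) (r E1m)
      | K0 => kron2 (r1 K0) (r K0)
      | K1 => kron2 (r1 K1) (r K1)
      | K0i => kron2 (r1 K0i) (r K0i)
      | K1i => kron2 (r1 K1i) (r K1i)
      end
  end.

(* the vector x (x) x (x) ... (x) x spanning U_0 *)
Fixpoint xvec (s : seq F) : 'cV[F]_(dimV s) :=
  match s return 'cV[F]_(dimV s) with
  | [::] => 1%:M
  | _ :: s' => col_mx (xvec s') 0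
  end.

Definition theta (a b c q : F) (d i : nat) : F :=
  a + b * q ^ (2 * (i : int) - (d : int)) + c * q ^ ((d : int) - 2 * (i : int)).

Variables (q : F) (s : seq F).

Definition Rop (u v : F) : 'M[F]_(dimV s) :=
  u *: rep q s E0p + v *: (rep q s E1m *m rep q s K1).
Definition Lop (us vs : F) : 'M[F]_(dimV s) :=
  us *: rep q s E1p + vs *: (rep q s E0m *m rep q s K0).
Definition Aop (a b c u v : F) : 'M[F]_(dimV s) :=
  a%:M + b *: rep q s K0 + c *: rep q s K1 + Rop u v.
Definition Asop (as_ bs cs us vs : F) : 'M[F]_(dimV s) :=
  as_%:M + bs *: rep q s K0 + cs *: rep q s K1 + Lop us vs.

Definition Es0 (d : nat) (as_ bs cs us vs : F) : 'M[F]_(dimV s) :=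
  \prod_(1 <= j < d.+1)
    ((theta as_ bs cs q d 0 - theta as_ bs cs q d j)^-1 *:
       (Asop as_ bs cs us vs - (theta as_ bs cs q d j)%:M)).

Definition tauA (d i : nat) (a b c u v : F) : 'M[F]_(dimV s) :=
  \prod_(k < i) (Aop a b c u v - (theta a b c q d k)%:M).

(* zeta_i: the scalar by which L^i R^i acts on U_0 = span(x(x)...(x)x),
   i.e. the x(x)...(x)x-coordinate of L^i R^i (x(x)...(x)x). *)
Definition zeta (i : nat) (u v us vs : F) : F :=
  ((xvec s)^T *m (Lop us vs ^+ i *m Rop u v ^+ i) *m xvec s) ord0 ord0.

End Rep.

(* V is graded by the weight spaces U_n (tensors with n factors y): K_0 and
   K_1 act on U_n by scalars, R raises the degree and L lowers it.  Hence
   A^* - theta^*_n acts on U_n as L, and E^*_0 maps V onto U_0 = span(x..x),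
   acting on U_n as L^n / ((theta^*_0 - theta^*_1)...(theta^*_0 - theta^*_n)).
   Likewise A - theta_k acts on U_k as R, so tau_i(A) x..x = R^i x..x.  As every
   column of E^*_0 lies in U_0, E^*_0 tau_i(A) E^*_0 = E^*_0 R^i x..x (x..x)^T E^*_0,
   and E^*_0 R^i x..x = L^i R^i x..x / (...) = zeta_i x..x / (...). *)
From HB Require Import structures.
From mathcomp Require Import all_boot all_order all_algebra all_field.
From mathcomp Require Import zify.
Import Order.TTheory GRing.Theory Num.Theory.
Local Open Scope ring_scope.

Lemma mulmx_colP (R : pzSemiRingType) m n (M N : 'M[R]_(m, n)) :
  (forall w : 'cV_n, M *m w = N *m w) -> M = N.
Proof.
move=> eqMN; apply/matrixP => i j.
by have := congr1 (fun w : 'cV_m => w i 0) (eqMN (delta_mx j 0)); rewrite -!colE !mxE.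
Qed.

Lemma sum_col_mx {V : nmodType} {m1 m2 k} (X : nat -> 'cV[V]_m1) (Y : nat -> 'cV[V]_m2) :
  \sum_(i < k) col_mx (X i) (Y i) = col_mx (\sum_(i < k) X i) (\sum_(i < k) Y i).
Proof.
elim: k => [|k IH]; first by rewrite !big_ord0 col_mx0.
by rewrite !big_ord_recr /= IH add_col_mx.
Qed.

Section WeightSpaces.
Context {F : fieldType}.

(* [homog s n w]: w lies in the weight space U_n spanned by the tensors with
   exactly n factors y.  The top block of a vector of V(a) (x) W is its
   x (x) W component, the bottom block its y (x) W component. *)
Fixpoint homog (s : seq F) (n : nat) : 'cV[F]_(dimV s) -> Prop :=
  match s return 'cV[F]_(dimV s) -> Prop with
  | [::] => fun w => n = 0%N \/ w = 0
  | _ :: s' => fun w => homog s' n (usubmx w) /\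
      (if n is n'.+1 then homog s' n' (dsubmx w) else dsubmx w = 0)
  end.

(* U_{n-1}, with U_{-1} = 0 *)
Definition homog_pred s n (w : 'cV[F]_(dimV s)) : Prop :=
  if n is n'.+1 then homog s n' w else w = 0.

Lemma homog_cons a s n (t b : 'cV[F]_(dimV s)) :
  homog (a :: s) n (col_mx t b) <->
  homog s n t /\ (if n is n'.+1 then homog s n' b else b = 0).
Proof. by rewrite /= col_mxKu col_mxKd. Qed.

Lemma homog0 s n : homog s n 0.
Proof.
elim: s n => [|a s IH] n /=; first by right.
by rewrite -col_mx0 col_mxKu col_mxKd; split => //; case: n.
Qed.

Lemma homogDZ {s n} (x y : F) {w1 w2} :
  homog s n w1 -> homog s n w2 -> homog s n (x *: w1 + y *: w2).
Proof.
elim: s n w1 w2 => [|a s IH] n w1 w2 /=.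
  case=> [->|->]; first by left.
  by case=> [->|->]; [left | right; rewrite !scaler0 addr0].
rewrite -[w1]vsubmxK -[w2]vsubmxK !col_mxKu !col_mxKd !scale_col_mx add_col_mx.
rewrite col_mxKu col_mxKd.
case: n => [|n] [h1 h2] [h3 h4]; split; try exact: IH.
by rewrite h2 h4 !scaler0 addr0.
Qed.

Lemma homogZ {s n} (x : F) {w} : homog s n w -> homog s n (x *: w).
Proof. by move=> h; have := homogDZ x 0 h h; rewrite scale0r addr0. Qed.

Lemma homogD {s n w1 w2} : homog s n w1 -> homog s n w2 -> homog s n (w1 + w2).
Proof. by move=> h1 h2; have := homogDZ 1 1 h1 h2; rewrite !scale1r. Qed.

Lemma homog_gt_size {s n w} : homog s n w -> (size s < n)%N -> w = 0.
Proof.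
elim: s n w => [|a s IH] n w; first by case=> [->|->].
rewrite -[w]vsubmxK => /homog_cons [ht hb] /= lt_s_n.
rewrite (IH _ _ ht (ltnW lt_s_n)); case: n lt_s_n ht hb => // n lt_s_n _ hb.
by rewrite (IH _ _ hb lt_s_n) col_mx0.
Qed.

Lemma homog_decomp {s} (w : 'cV[F]_(dimV s)) :
  exists f : nat -> 'cV[F]_(dimV s),
    w = \sum_(n < (size s).+1) f n /\ forall n, homog s n (f n).
Proof.
elim: s w => [|a s IH] w.
  exists (fun n => if n == 0%N then w else 0); split.
    by rewrite big_ord_recr big_ord0 /= add0r.
  by case=> [|n] /=; [left | right].
rewrite -[w]vsubmxK.
have [f [def_t hf]] := IH (usubmx w); have [g [def_b hg]] := IH (dsubmx w).
exists (fun n => col_mx (f n) (if n is n'.+1 then g n' else 0)); split.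
  rewrite (sum_col_mx f (fun n => if n is n'.+1 then g n' else 0)).
  congr col_mx.
    by rewrite big_ord_recr /= (homog_gt_size (hf _)) // addr0 def_t.
  by rewrite big_ord_recl /= add0r def_b.
by case=> [|n]; apply/homog_cons.
Qed.

Lemma xvec_homog s : homog s 0 (xvec s).
Proof. by elim: s => [|a s IH]; [left | apply/homog_cons]. Qed.

Lemma homog0_xvecE {s w} : homog s 0 w -> w = ((xvec s)^T *m w) 0 0 *: xvec s.
Proof.
elim: s w => [|a s IH] w.
  by move=> _; apply/matrixP => i j; rewrite !ord1 /= trmx1 mul1mx !mxE mulr1.
rewrite -[w]vsubmxK => /homog_cons [ht ->].
rewrite /= tr_col_mx mul_row_col trmx0 mul0mx addr0 scale_col_mx scaler0.
by rewrite {1}(IH _ ht).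
Qed.

End WeightSpaces.

Section GeneratorWeights.
Context {F : fieldType} {q : F}.
Hypothesis q_neq0 : q != 0.

Lemma kron2_mul_col n (A : 'M[F]_2) (B : 'M[F]_n) (t b : 'cV[F]_n) :
  kron2 A B *m col_mx t b =
  col_mx (A ord0 ord0 *: (B *m t) + A ord0 ord_max *: (B *m b))
         (A ord_max ord0 *: (B *m t) + A ord_max ord_max *: (B *m b)).
Proof. by rewrite /kron2 mul_block_col !scalemxAl. Qed.

Ltac kron2_simpl := rewrite /= ?mulmxDl !kron2_mul_col !mxE /= ?mulmx1 ?mul1mx
  ?scale0r ?scale1r ?add0r ?addr0 ?add_col_mx ?add0r ?addr0.

Lemma rep_E0p_col a s (t b : 'cV[F]_(dimV s)) :
  rep q (a :: s) E0p *m col_mx t b =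
  col_mx (rep q s E0p *m t) ((a / q) *: (rep q s K0 *m t) + rep q s E0p *m b).
Proof. by kron2_simpl. Qed.

Lemma rep_E1p_col a s (t b : 'cV[F]_(dimV s)) :
  rep q (a :: s) E1p *m col_mx t b =
  col_mx (rep q s K1 *m b + rep q s E1p *m t) (rep q s E1p *m b).
Proof. by kron2_simpl. Qed.

Lemma rep_E0m_col a s (t b : 'cV[F]_(dimV s)) :
  rep q (a :: s) E0m *m col_mx t b =
  col_mx ((q / a) *: b + q *: (rep q s E0m *m t)) (q^-1 *: (rep q s E0m *m b)).
Proof. by kron2_simpl. Qed.

Lemma rep_E1m_col a s (t b : 'cV[F]_(dimV s)) :
  rep q (a :: s) E1m *m col_mx t b =
  col_mx (q^-1 *: (rep q s E1m *m t)) (t + q *: (rep q s E1m *m b)).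
Proof. by kron2_simpl. Qed.

Lemma rep_K0_col a s (t b : 'cV[F]_(dimV s)) :
  rep q (a :: s) K0 *m col_mx t b =
  col_mx (q^-1 *: (rep q s K0 *m t)) (q *: (rep q s K0 *m b)).
Proof. by kron2_simpl. Qed.

Lemma rep_K1_col a s (t b : 'cV[F]_(dimV s)) :
  rep q (a :: s) K1 *m col_mx t b =
  col_mx (q *: (rep q s K1 *m t)) (q^-1 *: (rep q s K1 *m b)).
Proof. by kron2_simpl. Qed.

Lemma expq_addz1 (z : int) : q ^ (z + 1) = q * q ^ z.
Proof. by rewrite expfzDr // expr1z mulrC. Qed.

Lemma expq_subz1 (z : int) : q ^ (z - 1) = q^-1 * q ^ z.
Proof. by rewrite expfzDr // -exprz_inv expr1z mulrC. Qed.

Lemma rep_K0_homog {s n w} : homog s n w ->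
  rep q s K0 *m w = q ^ (2 * (n : int) - (size s : int)) *: w.
Proof.
elim: s n w => [|a s IH] n w.
  by case=> [->|->] /=; [rewrite mul1mx expr0z scale1r | rewrite mulmx0 scaler0].
rewrite -[w]vsubmxK => /homog_cons [ht hb].
rewrite rep_K0_col (IH _ _ ht) scale_col_mx scalerA; congr col_mx.
  have -> : 2 * (n : int) - ((size s).+1 : int) = 2 * (n : int) - (size s : int) - 1
    by lia.
  by rewrite expq_subz1.
case: n ht hb => [|n] ht hb; first by rewrite hb mulmx0 !scaler0.
rewrite (IH _ _ hb) scalerA.
have -> : 2 * (n.+1 : int) - ((size s).+1 : int) = 2 * (n : int) - (size s : int) + 1
  by lia.
by rewrite expq_addz1.
Qed.

Lemma rep_K1_homog {s n w} : homog s n w ->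
  rep q s K1 *m w = q ^ ((size s : int) - 2 * (n : int)) *: w.
Proof.
elim: s n w => [|a s IH] n w.
  by case=> [->|->] /=; [rewrite mul1mx expr0z scale1r | rewrite mulmx0 scaler0].
rewrite -[w]vsubmxK => /homog_cons [ht hb].
rewrite rep_K1_col (IH _ _ ht) scale_col_mx scalerA; congr col_mx.
  have -> : ((size s).+1 : int) - 2 * (n : int) = (size s : int) - 2 * (n : int) + 1
    by lia.
  by rewrite expq_addz1.
case: n ht hb => [|n] ht hb; first by rewrite hb mulmx0 !scaler0.
rewrite (IH _ _ hb) scalerA.
have -> : ((size s).+1 : int) - 2 * (n.+1 : int) = (size s : int) - 2 * (n : int) - 1
  by lia.
by rewrite expq_subz1.
Qed.

Lemma rep_E0p_homog {s n w} : homog s n w -> homog s n.+1 (rep q s E0p *m w).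
Proof.
elim: s n w => [|a s IH] n w; first by rewrite /= mul0mx; right.
rewrite -[w]vsubmxK => /homog_cons [ht hb]; rewrite rep_E0p_col.
apply/homog_cons; split; first exact: IH.
apply: homogD; first by rewrite (rep_K0_homog ht); do 2 apply: homogZ.
by case: n ht hb => [|n] ht hb; [rewrite hb mulmx0; apply: homog0 | apply: IH].
Qed.

Lemma rep_E1m_homog {s n w} : homog s n w -> homog s n.+1 (rep q s E1m *m w).
Proof.
elim: s n w => [|a s IH] n w; first by rewrite /= mul0mx; right.
rewrite -[w]vsubmxK => /homog_cons [ht hb]; rewrite rep_E1m_col.
apply/homog_cons; split; first by apply/homogZ/IH.
apply: homogD => //.
case: n ht hb => [|n] ht hb; first by rewrite hb mulmx0 scaler0; apply: homog0.
by apply/homogZ/IH.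
Qed.

Lemma rep_E1p_homog {s n w} : homog s n w -> homog_pred s n (rep q s E1p *m w).
Proof.
elim: s n w => [|a s IH] n w; first by rewrite /= mul0mx; case: n => // n _; apply: homog0.
rewrite -[w]vsubmxK => /homog_cons [ht hb]; rewrite rep_E1p_col.
have Et := IH _ _ ht; case: n ht hb Et => [|n] ht hb Et; rewrite /homog_pred in Et *.
  by rewrite hb Et !mulmx0 addr0 col_mx0.
apply/homog_cons; split; last exact: IH.
by rewrite (rep_K1_homog hb); apply: homogD => //; apply: homogZ.
Qed.

Lemma rep_E0m_homog {s n w} : homog s n w -> homog_pred s n (rep q s E0m *m w).
Proof.
elim: s n w => [|a s IH] n w; first by rewrite /= mul0mx; case: n => // n _; apply: homog0.
rewrite -[w]vsubmxK => /homog_cons [ht hb]; rewrite rep_E0m_col.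
have Et := IH _ _ ht; case: n ht hb Et => [|n] ht hb Et; rewrite /homog_pred in Et *.
  by rewrite hb Et !mulmx0 !scaler0 addr0 col_mx0.
apply/homog_cons; split; first by apply: homogD; apply: homogZ.
have := IH _ _ hb; case: n {ht Et} hb => [|n] hb Eb; last exact: homogZ.
by rewrite Eb scaler0.
Qed.

End GeneratorWeights.

Section RaisingLowering.
Context {F : fieldType} {q : F} {s : seq F}.
Hypothesis q_neq0 : q != 0.

Lemma Rop_homog u v {n w} : homog s n w -> homog s n.+1 (Rop q s u v *m w).
Proof.
move=> hw; rewrite /Rop mulmxDl -!scalemxAl -mulmxA (rep_K1_homog q_neq0 hw).
rewrite -scalemxAr; apply: homogD; apply: homogZ.
  exact: rep_E0p_homog.
exact/homogZ/rep_E1m_homog.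
Qed.

Lemma Lop_homog us vs {n w} : homog s n w -> homog_pred s n (Lop q s us vs *m w).
Proof.
move=> hw; rewrite /Lop mulmxDl -!scalemxAl -mulmxA (rep_K0_homog q_neq0 hw) -scalemxAr.
have := rep_E1p_homog q_neq0 hw; have := rep_E0m_homog hw.
case: n hw => [|n] hw /= E0m_w E1p_w; first by rewrite E0m_w E1p_w !scaler0 addr0.
by apply: homogD; do ?apply: homogZ.
Qed.

Lemma Rop_exp_homog u v k {n w} :
  homog s n w -> homog s (n + k) (Rop q s u v ^+ k *m w).
Proof.
elim: k => [|k IH] hw; first by rewrite addn0 expr0 -idmxE mul1mx.
by rewrite addnS exprS -mulmxE -mulmxA; apply/Rop_homog/IH.
Qed.

Lemma Lop_exp_homog us vs k {n w} :
  homog s (n + k) w -> homog s n (Lop q s us vs ^+ k *m w).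
Proof.
elim: k n w => [|k IH] n w hw; first by rewrite expr0 -idmxE mul1mx -(addn0 n).
rewrite exprSr -mulmxE -mulmxA; apply: IH.
by have := Lop_homog us vs hw; rewrite addnS.
Qed.

Lemma Aop_homog a b c u v {n w} : homog s n w ->
  Aop q s a b c u v *m w = theta a b c q (size s) n *: w + Rop q s u v *m w.
Proof.
move=> hw; rewrite /Aop !mulmxDl mul_scalar_mx -!scalemxAl.
by rewrite (rep_K0_homog q_neq0 hw) (rep_K1_homog q_neq0 hw) !scalerA /theta !scalerDl.
Qed.

Lemma Asop_homog as_ bs cs us vs {n w} : homog s n w ->
  Asop q s as_ bs cs us vs *m w = theta as_ bs cs q (size s) n *: w + Lop q s us vs *m w.
Proof.
move=> hw; rewrite /Asop !mulmxDl mul_scalar_mx -!scalemxAl.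
by rewrite (rep_K0_homog q_neq0 hw) (rep_K1_homog q_neq0 hw) !scalerA /theta !scalerDl.
Qed.

Lemma zeta_xvec k u v us vs :
  Lop q s us vs ^+ k *m (Rop q s u v ^+ k *m xvec s) = zeta q s k u v us vs *: xvec s.
Proof.
have hLR : homog s 0 (Lop q s us vs ^+ k *m (Rop q s u v ^+ k *m xvec s)).
  by apply: Lop_exp_homog; apply: Rop_exp_homog; apply: xvec_homog.
by rewrite {1}(homog0_xvecE hLR) /zeta !mulmxA.
Qed.

Lemma tauA_xvec a b c u v k :
  tauA q s (size s) k a b c u v *m xvec s = Rop q s u v ^+ k *m xvec s.
Proof.
elim: k => [|k IH]; first by rewrite /tauA big_ord0 expr0.
set A := Aop q s a b c u v; set th := theta a b c q (size s).
have -> : tauA q s (size s) k.+1 a b c u v = (A - (th k)%:M) * tauA q s (size s) k a b c u v.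
  rewrite /tauA big_ord_recr /=; apply/esym/commr_prod => j _.
  rewrite -comm_mxE; apply: comm_mxB; apply/comm_mx_sym/comm_mxB;
  by first [apply: comm_mx_refl | apply: comm_mx_scalar | apply: comm_scalar_mx].
have hRk : homog s k (Rop q s u v ^+ k *m xvec s).
  by rewrite -[k]add0n; apply/Rop_exp_homog/xvec_homog.
rewrite -mulmxE -mulmxA IH mulmxBl mul_scalar_mx (Aop_homog a b c u v hRk).
by rewrite addrAC subrr add0r exprS -mulmxE mulmxA.
Qed.

End RaisingLowering.

Section DualPrimitiveIdempotent.
Context {F : fieldType} {q : F} {s : seq F} {as_ bs cs us vs : F}.
Hypothesis q_neq0 : q != 0.

Local Notation ths j := (theta as_ bs cs q (size s) j).
Local Notation As := (Asop q s as_ bs cs us vs).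
Local Notation L := (Lop q s us vs).
Local Notation E := (Es0 q s (size s) as_ bs cs us vs).
Local Notation Es0_factor j := ((ths 0 - ths j)^-1 *: (As - (ths j)%:M)).

Hypothesis ths_neq0 : forall j, (0 < j <= size s)%N -> ths 0 - ths j != 0.

Lemma Es0_factor_homog j {n w} : homog s n w ->
  Es0_factor j *m w = (ths 0 - ths j)^-1 *: ((ths n - ths j) *: w + L *m w).
Proof.
move=> hw; rewrite -scalemxAl mulmxBl mul_scalar_mx (Asop_homog q_neq0 _ _ _ _ _ hw).
by congr (_ *: _); rewrite scalerBl addrAC.
Qed.

(* A^* - theta^*_j acts on U_n as (theta^*_n - theta^*_j) + L, so the factor
   j = n maps U_n into U_{n-1}; hence the product over 1 <= j <= m maps U_n
   (n <= m) into U_0. *)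
Lemma Es0_prefix_homog0 m {n w} : (n <= m)%N -> homog s n w ->
  homog s 0 ((\prod_(1 <= j < m.+1) Es0_factor j) *m w).
Proof.
elim: m n w => [|m IH] n w le_n_m hw.
  by rewrite big_geq // -idmxE mul1mx; move: le_n_m; rewrite leqn0 => /eqP <-.
rewrite big_nat_recr //= -mulmxE -mulmxA (Es0_factor_homog _ hw) -scalemxAr.
rewrite mulmxDr; apply/homogZ/homogD.
  rewrite -scalemxAr; have [le_n_m' | lt_m_n] := leqP n m.
    exact/homogZ/(IH _ _ le_n_m' hw).
  have -> : n = m.+1 by apply/eqP; rewrite eqn_leq le_n_m lt_m_n.
  by rewrite subrr scale0r; apply: homog0.
have := Lop_homog q_neq0 us vs hw.
case: n le_n_m hw => [|n] le_n_m hw /= hLw; first by rewrite hLw mulmx0; apply: homog0.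
exact: IH hLw.
Qed.

Lemma Es0_homog0 (w : 'cV[F]_(dimV s)) : homog s 0 (E *m w).
Proof.
have [f [-> hf]] := homog_decomp w.
rewrite mulmx_sumr; apply: big_ind => [|x y|n _]; first exact: homog0.
  exact: homogD.
exact: (Es0_prefix_homog0 (size s) (ltn_ord n) (hf n)).
Qed.

Lemma Es0_id_homog0 w : homog s 0 w -> E *m w = w.
Proof.
move=> hw; suff Eprefix m : (m <= size s)%N ->
    (\prod_(1 <= j < m.+1) Es0_factor j) *m w = w by exact: Eprefix.
elim: m => [|m IH] le_m_s; first by rewrite big_geq // -idmxE mul1mx.
rewrite big_nat_recr //= -mulmxE -mulmxA (Es0_factor_homog _ hw).
rewrite (Lop_homog q_neq0 us vs hw : L *m w = 0).
by rewrite addr0 scalerA mulVf ?scale1r ?IH ?(ltnW le_m_s) // ths_neq0.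
Qed.

Lemma Es0_Asop (w : 'cV[F]_(dimV s)) : E *m (As *m w) = ths 0 *: (E *m w).
Proof.
have comm_As_E : comm_mx As E.
  rewrite comm_mxE; apply: commr_prod => j _; rewrite -comm_mxE /comm_mx.
  by rewrite -!scalemxAr -!scalemxAl mulmxBl mulmxBr scalar_mxC.
rewrite mulmxA -comm_As_E -mulmxA (Asop_homog q_neq0 _ _ _ _ _ (Es0_homog0 w)).
by rewrite (Lop_homog q_neq0 us vs (Es0_homog0 w) : L *m _ = 0) addr0.
Qed.

(* Since E (A^* - theta^*_0) = 0 and A^* - theta^*_n acts on U_n as L,
   E w = E L w / (theta^*_0 - theta^*_n) for w in U_n. *)
Lemma Es0_homog {n w} : (n <= size s)%N -> homog s n w ->
  E *m w = (\prod_(1 <= j < n.+1) (ths 0 - ths j))^-1 *: (L ^+ n *m w).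
Proof.
elim: n w => [|n IH] w le_n_s hw.
  by rewrite big_geq // invr1 scale1r expr0 -idmxE mul1mx Es0_id_homog0.
have hLw := Lop_homog q_neq0 us vs hw.
have ths_n := ths_neq0 n.+1 le_n_s.
have E_Lw : E *m (L *m w) = (ths 0 - ths n.+1) *: (E *m w).
  have := Es0_Asop w; rewrite (Asop_homog q_neq0 _ _ _ _ _ hw) mulmxDr -scalemxAr.
  by move/(canRL (addKr _)); rewrite scalerBl addrC.
have -> : E *m w = (ths 0 - ths n.+1)^-1 *: (E *m (L *m w)).
  by rewrite E_Lw scalerA mulVf // scale1r.
rewrite (IH _ (ltnW le_n_s) hLw) scalerA [in RHS]big_nat_recr //= invfM.
by rewrite exprSr mulmxA mulrC.
Qed.

Lemma Es0_xvec : E = xvec s *m ((xvec s)^T *m E).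
Proof.
apply: mulmx_colP => w; rewrite -!mulmxA {1}(homog0_xvecE (Es0_homog0 w)).
by rewrite [X in _ = _ *m X]mx11_scalar mul_mx_scalar.
Qed.

Lemma Es0_tauA_xvec a b c u v k : (k <= size s)%N ->
  E *m (tauA q s (size s) k a b c u v *m xvec s)
  = (zeta q s k u v us vs / \prod_(1 <= j < k.+1) (ths 0 - ths j)) *: xvec s.
Proof.
have hRk : homog s k (Rop q s u v ^+ k *m xvec s).
  by rewrite -[k]add0n; apply/(Rop_exp_homog q_neq0)/xvec_homog.
move=> le_k_s; rewrite (tauA_xvec q_neq0) (Es0_homog le_k_s hRk) (zeta_xvec q_neq0).
by rewrite scalerA mulrC.
Qed.

End DualPrimitiveIdempotent.

Theorem lemma9p10 (F : closedFieldType) (d : nat) (alpha : seq F)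
  (q a b c as_ bs cs u v us vs : F)
  (hsize : size alpha = d)
  (halpha : forall x, x \in alpha -> x != 0)
  (hq : q != 0) (hb : b != 0) (hc : c != 0) (hbs : bs != 0) (hcs : cs != 0)
  (hq2 : q ^+ 2 != 1) (hq2' : q ^+ 2 != -1)
  (hth : forall i j : nat, (i <= d)%N -> (j <= d)%N ->
           theta a b c q d i = theta a b c q d j -> i = j)
  (hths : forall i j : nat, (i <= d)%N -> (j <= d)%N ->
           theta as_ bs cs q d i = theta as_ bs cs q d j -> i = j)
  (huv : u * vs = - b * bs * q^-1 * (q - q^-1) ^+ 2)
  (hvu : v * us = - c * cs * q^-1 * (q - q^-1) ^+ 2)
  (i : nat) (hi : (i <= d)%N) :
  Es0 q alpha d as_ bs cs us vs *m tauA q alpha d i a b c u v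
    *m Es0 q alpha d as_ bs cs us vs
  = (zeta q alpha i u v us vs
       / \prod_(1 <= j < i.+1)
            (theta as_ bs cs q d 0 - theta as_ bs cs q d j))
    *: Es0 q alpha d as_ bs cs us vs.
Proof.
subst d.
have ths_neq0 j : (0 < j <= size alpha)%N ->
    theta as_ bs cs q (size alpha) 0 - theta as_ bs cs q (size alpha) j != 0.
  case/andP=> j_gt0 le_j; rewrite subr_eq0; apply/eqP => /hths eq0j.
  by move: j_gt0; rewrite -eq0j.
rewrite [X in _ *m X = _](Es0_xvec hq) mulmxA -(mulmxA _ _ (xvec alpha)).
by rewrite (Es0_tauA_xvec hq ths_neq0) // -scalemxAl -(Es0_xvec hq).
Qed.
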